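(* Let $g\sim(a,b,\mu)$ be a Bernstein function and $r:=r[g]$. Then \[\big[(t\operatorname{Re}z)\,e^{-t\operatorname{Re}z}\big]\,r(t)\le\operatorname{Re}g(z)\le|g(z)|\le\max(2,t|z|)\,r(t)\] for all $t>0$ and all $z\in\mathbb C$ with $\operatorname{Re}z>0$.
   Context: A Bernstein function $g\sim(a,b,\mu)$ is $g(z)=a+bz+\int_{(0,\infty)}(1-e^{-sz})\mu(\mathrm ds)$ ($\operatorname{Re} z>0$) with $a,b\ge0$, $\mu$ positive Radon on $(0,\infty)$, $\int\frac{s}{1+s}\mu(\mathrm ds)<\infty$. Rate function $r[g](t):=\frac a2+\frac bt+\int_{(0,\infty)}\min(s/t,1)\mu(\mathrm ds)$, $t>0$. *)

From HB Require Import structures.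
From mathcomp Require Import all_boot all_order all_algebra.
From mathcomp Require Import all_classical all_reals all_analysis.
Set Implicit Arguments. Unset Strict Implicit. Unset Printing Implicit Defensive.
Import Order.TTheory GRing.Theory Num.Theory.
Import numFieldNormedType.Exports.
Local Open Scope classical_set_scope.
Local Open Scope ring_scope.

(* A Bernstein function g ~ (a,b,mu): mu is a (Borel) measure on R; only its
   restriction to (0,oo) matters, since all integrals are over `]0,+oo[. *)
Definition bernstein_triple (R : realType) (a b : R)
  (mu : {measure set R -> \bar R}) : Prop :=
  0 <= a /\ 0 <= b /\
  mu.-integrable `]0%R, +oo[ (fun s : R => (s / (1 + s))%:E).

(* Real and imaginary parts of g(z) for z = x + i y:
   g(z) = a + b z + \int (1 - e^{-s z}) mu(ds),
   e^{-s z} = e^{-s x} (cos (s y) - i sin (s y)). *)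
Definition bern_re (R : realType) (a b : R) (mu : {measure set R -> \bar R})
  (x y : R) : R :=
  a + b * x + Rintegral mu `]0%R, +oo[ (fun s => 1 - expR (- (s * x)) * cos (s * y)).

Definition bern_im (R : realType) (a b : R) (mu : {measure set R -> \bar R})
  (x y : R) : R :=
  b * y + Rintegral mu `]0%R, +oo[ (fun s => expR (- (s * x)) * sin (s * y)).

Definition bern_abs (R : realType) (a b : R) (mu : {measure set R -> \bar R})
  (x y : R) : R :=
  Num.sqrt (bern_re a b mu x y ^+ 2 + bern_im a b mu x y ^+ 2).

Definition rate (R : realType) (a b : R) (mu : {measure set R -> \bar R})
  (t : R) : R :=
  a / 2 + b / t + Rintegral mu `]0%R, +oo[ (fun s => Num.min (s / t) 1).

(* Both bounds integrate pointwise bounds on the kernel [1 - e^{-sz}], z = x + iy, against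
   [min(s/t, 1)].  From below, [Re (1 - e^{-sz}) >= 1 - e^{-sx} >= tx e^{-tx} min(s/t, 1)]
   by [w e^{-w} <= 1 - e^{-w}], splitting at [s = t]; the drift terms [a] and [b x] are
   compared with [a/2] and [b/t] in the same way.  From above,
   [|1 - e^{-sz}|^2 = (1 - e^{-sx})^2 + 2 e^{-sx} (1 - cos (sy))] is at most both
   [s^2 |z|^2] and [4], so [|1 - e^{-sz}| <= max(2, t|z|) min(s/t, 1)].  The modulus
   [|g(z)|] is reached without complex integrals: writing [|g|^2 = Re g * Re g + Im g * Im g]
   and applying Cauchy-Schwarz under the integral gives
   [|g|^2 <= |g| (a + b|z| + int |1 - e^{-sz}| mu(ds))]. *)

From HB Require Import structures.
From mathcomp Require Import all_boot all_order all_algebra.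
From mathcomp Require Import all_classical all_reals all_analysis.
From mathcomp Require Import measurable_realfun ring lra.
Import Order.TTheory GRing.Theory Num.Theory.
Import numFieldNormedType.Exports.
Local Open Scope classical_set_scope.
Local Open Scope ring_scope.

Section ElementaryBounds.
Context {R : realType}.
Implicit Types p q u w : R.

Lemma sin_norm_le u : `|sin u| <= `|u|.
Proof.
wlog u0 : u / 0 <= u.
  move=> hw; have [|/ltW] := leP 0 u; first exact: hw.
  by rewrite -oppr_ge0 => /hw; rewrite sinN !normrN.
have [c _] := MVT_segment (f := @sin R) (df := cos) u0
  (fun c _ => is_derive_sin c) (continuous_subspaceT (@continuous_sin R)).
rewrite sin0 !subr0 => ->.
by rewrite normrM ler_piMl // cos_max.
Qed.

Lemma one_sub_cos_le q : 1 - cos q <= q ^+ 2 / 2.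
Proof.
have hq : q = (q / 2) *+ 2 by rewrite mulr2n; lra.
have hc : cos q = 2 * cos (q / 2) ^+ 2 - 1 by rewrite {1}hq cos_mulr2n mulr_natl.
have cs := cos2Dsin2 (q / 2).
have : `|sin (q / 2)| ^+ 2 <= `|q / 2| ^+ 2.
  by rewrite ler_sqr ?nnegrE // sin_norm_le.
rewrite !real_normK ?num_real // hc.
by rewrite !expr2 in cs *; nra.
Qed.

Lemma le_sqrt_sqr p q : 0 <= q -> p <= q ^+ 2 -> Num.sqrt p <= q.
Proof.
move=> q0 pq; have [p0|/ltW p0] := leP 0 p; last by rewrite (ler0_sqrtr p0).
by rewrite -(ger0_norm q0) -sqrtr_sqr ler_sqrt // sqr_ge0.
Qed.

Lemma normr_le_sqrt_sqrD p q : `|p| <= Num.sqrt (p ^+ 2 + q ^+ 2).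
Proof. by rewrite -sqrtr_sqr ler_sqrt ?addr_ge0 ?sqr_ge0 // lerDl sqr_ge0. Qed.

Lemma cauchy_schwarz2 p q u w :
  p * u + q * w <= Num.sqrt (p ^+ 2 + q ^+ 2) * Num.sqrt (u ^+ 2 + w ^+ 2).
Proof.
rewrite -sqrtrM ?addr_ge0 ?sqr_ge0 //.
apply: le_trans (ler_norm _) _; rewrite -sqrtr_sqr ler_sqrt ?mulr_ge0 ?addr_ge0 ?sqr_ge0 //.
have := sqr_ge0 (p * w - q * u); rewrite !expr2; nra.
Qed.

Lemma le_of_sqr_le_mul w q : 0 <= q -> w ^+ 2 <= w * q -> w <= q.
Proof. by move=> q0; rewrite expr2; nra. Qed.

Lemma mul_expRN_le_1_sub_expRN w : 0 <= w -> w * expR (- w) <= 1 - expR (- w).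
Proof.
move=> w0; have := expR_ge1Dx w; have := expR_gt0 (- w).
have : expR w * expR (- w) = 1 by rewrite -expRD subrr expR0.
nra.
Qed.

Lemma sqr_one_sub_expN_le p q : 0 <= p ->
  (1 - expR (- p) * cos q) ^+ 2 + (expR (- p) * sin q) ^+ 2 <=
    Num.min (p ^+ 2 + q ^+ 2) (2 ^+ 2).
Proof.
move=> p0; have E0 := expR_gt0 (- p).
have E1 : expR (- p) <= 1 by rewrite expR_le1 oppr_le0.
have E2 := expR_ge1Dx (- p).
have hc := one_sub_cos_le q; have c1 := cos_geN1 q; have c2 := cos_le1 q.
have cs := cos2Dsin2 q.
set E := expR (- p) in E0 E1 E2 *.
have -> : (1 - E * cos q) ^+ 2 + (E * sin q) ^+ 2 = (1 - E) ^+ 2 + 2 * E * (1 - cos q).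
  by rewrite !expr2 in cs *; nra.
by rewrite le_min; apply/andP; split; rewrite !expr2 in hc *; nra.
Qed.
End ElementaryBounds.

Section RealIntegrals.
Variables (d : measure_display) (T : measurableType d) (R : realType).
Variables (mu : {measure set T -> \bar R}) (D : set T).
Hypothesis mD : measurable D.

Lemma integrableZl_EFin (k : R) {f : T -> R} :
  mu.-integrable D (EFin \o f) -> mu.-integrable D (EFin \o (fun x => k * f x)).
Proof. by move=> /(integrableZl mD k); apply: (eq_integrable mD) => x _. Qed.

(* Dual form of [|int (u, v)| <= int |(u, v)|], which avoids complex-valued integrals. *)
Lemma Rintegral_dot_le (p q : R) (u v h : T -> R) :
  mu.-integrable D (EFin \o u) -> mu.-integrable D (EFin \o v) ->
  mu.-integrable D (EFin \o h) ->
  (forall x, D x -> Num.sqrt (u x ^+ 2 + v x ^+ 2) <= h x) ->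
  p * Rintegral mu D u + q * Rintegral mu D v <=
    Num.sqrt (p ^+ 2 + q ^+ 2) * Rintegral mu D h.
Proof.
move=> iu iv ih uvh.
have [ipu iqv] := (integrableZl_EFin p iu, integrableZl_EFin q iv).
rewrite -!RintegralZl // -RintegralD //; apply: le_Rintegral => //.
- by apply: (eq_integrable mD _ _ _ (integrableD mD ipu iqv)) => x _.
- exact: integrableZl_EFin.
- move=> x Dx; apply: le_trans (cauchy_schwarz2 _ _ _ _) _.
  by rewrite ler_wpM2l ?sqrtr_ge0 ?uvh.
Qed.
End RealIntegrals.

Section Kernels.
Context {R : realType}.
Implicit Types A B s t x y : R.

Definition kernel_re x y s := 1 - expR (- (s * x)) * cos (s * y).
Definition kernel_im x y s := expR (- (s * x)) * sin (s * y).
Definition rate_kernel t s := Num.min (s / t) 1.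

Lemma kernel_norm_le x y s : 0 <= x -> 0 <= s ->
  Num.sqrt (kernel_re x y s ^+ 2 + kernel_im x y s ^+ 2) <=
    Num.min (s * Num.sqrt (x ^+ 2 + y ^+ 2)) 2.
Proof.
move=> x0 s0; have := sqr_one_sub_expN_le _ (s * y) (mulr_ge0 s0 x0).
rewrite le_min => /andP[small big].
rewrite le_min; apply/andP; split; apply: le_sqrt_sqr => //.
- by rewrite mulr_ge0 ?sqrtr_ge0.
- by rewrite [X in _ <= X]exprMn sqr_sqrtr ?addr_ge0 ?sqr_ge0 // mulrDr -!exprMn.
Qed.

Lemma rate_kernel_small t s : 0 < t -> s <= t -> rate_kernel t s = s / t.
Proof. by move=> t0 st; rewrite /rate_kernel min_l // ler_pdivrMr // mul1r. Qed.

Lemma rate_kernel_large t s : 0 < t -> t <= s -> rate_kernel t s = 1.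
Proof. by move=> t0 ts; rewrite /rate_kernel min_r // ler_pdivlMr // mul1r. Qed.

Lemma min_le_max_mul_rate_kernel A B s t : 0 <= s -> 0 < t ->
  Num.min (s * A) B <= Num.max B (t * A) * rate_kernel t s.
Proof.
move=> s0 t0; have [st|/ltW ts] := leP s t.
- rewrite rate_kernel_small // ge_min; apply/orP; left.
  have -> : s * A = t * A * (s / t) by field; rewrite gt_eqF.
  by apply: ler_wpM2r; [rewrite divr_ge0 // ltW | rewrite le_max lexx orbT].
- rewrite rate_kernel_large // mulr1 ge_min; apply/orP; right.
  by rewrite le_max lexx.
Qed.

Lemma rate_kernel_le_kernel_re t x y s : 0 < t -> 0 < x -> 0 <= s ->
  t * x * expR (- (t * x)) * rate_kernel t s <= kernel_re x y s.
Proof.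
move=> t0 x0 s0.
have : 1 - expR (- (s * x)) <= kernel_re x y s.
  by rewrite lerD2l lerN2 ger_pMr ?expR_gt0 ?cos_le1.
apply: le_trans; have [st|/ltW ts] := leP s t.
- rewrite rate_kernel_small //.
  have -> : t * x * expR (- (t * x)) * (s / t) = s * x * expR (- (t * x)).
    by field; rewrite gt_eqF.
  apply: le_trans (mul_expRN_le_1_sub_expRN _ (mulr_ge0 s0 (ltW x0))).
  apply: ler_wpM2l; first by rewrite mulr_ge0 // ltW.
  by rewrite ler_expR lerN2 ler_pM2r.
- rewrite rate_kernel_large // mulr1.
  apply: le_trans (mul_expRN_le_1_sub_expRN _ (mulr_ge0 (ltW t0) (ltW x0))) _.
  by rewrite lerD2l lerN2 ler_expR lerN2 ler_pM2r.
Qed.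
End Kernels.

Section Measurability.
Context {R : realType}.

Lemma measurable_kernel_re (x y : R) : measurable_fun setT (kernel_re x y).
Proof.
apply: measurable_funB => //; apply: measurable_funM.
  by apply: measurableT_comp => //; apply: measurable_funN; exact: measurable_funM.
apply: measurableT_comp; last exact: measurable_funM.
exact: continuous_measurable_fun (@continuous_cos R).
Qed.

Lemma measurable_kernel_im (x y : R) : measurable_fun setT (kernel_im x y).
Proof.
apply: measurable_funM.
  by apply: measurableT_comp => //; apply: measurable_funN; exact: measurable_funM.
apply: measurableT_comp; last exact: measurable_funM.
exact: continuous_measurable_fun (@continuous_sin R).
Qed.

Lemma measurable_rate_kernel (t : R) : measurable_fun setT (rate_kernel t).
Proof. by apply: measurable_minr => //; exact: measurable_funM. Qed.
End Measurability.

Lemma min_le_bernstein_weight {R : realType} (A B s : R) :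
  0 <= A -> 0 <= B -> 0 < s -> Num.min (s * A) B <= 2 * (A + B) * (s / (1 + s)).
Proof.
move=> A0 B0 s0; have [m1 m2] : Num.min (s * A) B <= s * A /\ Num.min (s * A) B <= B.
  by rewrite !ge_min !lexx orbT.
rewrite mulrA ler_pdivlMr ?addr_gt0 //.
have [s1|s1] := leP s 1; nra.
Qed.

Section BernsteinIntegrable.
Context {R : realType} (mu : {measure set R -> \bar R}).
Hypothesis mu_weight : mu.-integrable `]0%R, +oo[ (fun s : R => (s / (1 + s))%:E).

Lemma integrable_le_min (f : R -> R) (A B : R) : measurable_fun setT f ->
  0 <= A -> 0 <= B -> (forall s, 0 < s -> `|f s| <= Num.min (s * A) B) ->
  mu.-integrable `]0%R, +oo[ (EFin \o f).
Proof.
move=> mf A0 B0 fAB; have mD : measurable (`]0%R, +oo[ : set R) by [].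
apply: le_integrable (integrableZl mD (2 * (A + B)) mu_weight) => //.
  by apply/measurable_EFinP; apply: measurable_funS mf.
move=> s; rewrite /= in_itv /= andbT => s0.
rewrite lee_fin; apply: le_trans (fAB s s0) (le_trans _ (ler_norm _)).
exact: min_le_bernstein_weight.
Qed.

Lemma integrable_kernel_re (x y : R) : 0 <= x ->
  mu.-integrable `]0%R, +oo[ (EFin \o kernel_re x y).
Proof.
move=> x0; apply: integrable_le_min (measurable_kernel_re x y) (sqrtr_ge0 _) (ler0n _ 2) _.
move=> s s0; apply: le_trans (normr_le_sqrt_sqrD _ (kernel_im x y s)) _.
exact: kernel_norm_le (ltW s0).
Qed.

Lemma integrable_kernel_im (x y : R) : 0 <= x ->
  mu.-integrable `]0%R, +oo[ (EFin \o kernel_im x y).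
Proof.
move=> x0; apply: integrable_le_min (measurable_kernel_im x y) (sqrtr_ge0 _) (ler0n _ 2) _.
move=> s s0; apply: le_trans (normr_le_sqrt_sqrD _ (kernel_re x y s)) _.
by rewrite addrC; exact: kernel_norm_le (ltW s0).
Qed.

Lemma integrable_rate_kernel (t : R) : 0 < t ->
  mu.-integrable `]0%R, +oo[ (EFin \o rate_kernel t).
Proof.
move=> t0; have it0 : 0 <= t^-1 by rewrite invr_ge0 ltW.
apply: integrable_le_min (measurable_rate_kernel t) it0 ler01 _ => s s0.
by rewrite ger0_norm // le_min ler01 andbT divr_ge0 // ltW.
Qed.
End BernsteinIntegrable.

Section BernsteinBounds.
Context {R : realType} (a b : R) (mu : {measure set R -> \bar R}).
Hypotheses (a0 : 0 <= a) (b0 : 0 <= b).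
Hypothesis mu_weight : mu.-integrable `]0%R, +oo[ (fun s : R => (s / (1 + s))%:E).
Variables (t x y : R).
Hypotheses (t0 : 0 < t) (x0 : 0 < x).

Lemma bern_re_ge_rate :
  t * x * expR (- (t * x)) * rate a b mu t <= bern_re a b mu x y.
Proof.
set c := t * x * expR (- (t * x)).
have c1 : c <= 1.
  have := mul_expRN_le_1_sub_expRN _ (mulr_ge0 (ltW t0) (ltW x0)).
  by have := expR_gt0 (- (t * x)); rewrite -/c; lra.
have ha : c * (a / 2) <= a.
  by apply: le_trans (ler_piMl _ c1) _; [rewrite divr_ge0 | move: a0; lra].
have hb : c * (b / t) <= b * x.
  have -> : c * (b / t) = b * x * expR (- (t * x)) by rewrite /c; field; rewrite gt_eqF.
  apply: ler_piMr; first by rewrite mulr_ge0 // ltW.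
  by rewrite expR_le1 oppr_le0 mulr_ge0 // ltW.
have hu : c * Rintegral mu `]0%R, +oo[ (rate_kernel t) <=
    Rintegral mu `]0%R, +oo[ (kernel_re x y).
  rewrite -RintegralZl ?integrable_rate_kernel //.
  apply: le_Rintegral => //.
  - exact/integrableZl_EFin/integrable_rate_kernel.
  - exact/integrable_kernel_re/ltW.
  - move=> s; rewrite /= in_itv /= andbT => s0.
    exact: rate_kernel_le_kernel_re (ltW s0).
rewrite /rate /bern_re -/(kernel_re x y) -/(rate_kernel t) !mulrDr.
by rewrite lerD ?lerD.
Qed.

Lemma sqr_bern_abs_le : bern_abs a b mu x y ^+ 2 <=
  bern_abs a b mu x y * (a + b * Num.sqrt (x ^+ 2 + y ^+ 2) +
    Num.max 2 (t * Num.sqrt (x ^+ 2 + y ^+ 2)) * Rintegral mu `]0%R, +oo[ (rate_kernel t)).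
Proof.
set N := bern_abs a b mu x y; set re := bern_re a b mu x y; set im := bern_im a b mu x y.
set K := Num.sqrt (x ^+ 2 + y ^+ 2); set M := Num.max 2 (t * K).
have hint : re * Rintegral mu `]0%R, +oo[ (kernel_re x y) +
    im * Rintegral mu `]0%R, +oo[ (kernel_im x y) <=
    N * Rintegral mu `]0%R, +oo[ (fun s => M * rate_kernel t s).
  apply: Rintegral_dot_le => //.
  - exact/integrable_kernel_re/ltW.
  - exact/integrable_kernel_im/ltW.
  - exact/integrableZl_EFin/integrable_rate_kernel.
  - move=> s; rewrite /= in_itv /= andbT => s0.
    apply: le_trans (kernel_norm_le _ _ _ (ltW x0) (ltW s0)) _.
    exact: min_le_max_mul_rate_kernel (ltW s0) t0.
rewrite RintegralZl ?integrable_rate_kernel // in hint.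
have : re * a <= N * a.
  by apply: ler_wpM2r a0 _ _ (le_trans (ler_norm _) _); exact: normr_le_sqrt_sqrD.
have : b * (re * x + im * y) <= b * (N * K) by apply: ler_wpM2l b0 _ _ (cauchy_schwarz2 _ _ _ _).
have -> : N ^+ 2 = re * (a + b * x + Rintegral mu `]0%R, +oo[ (kernel_re x y)) +
    im * (b * y + Rintegral mu `]0%R, +oo[ (kernel_im x y)).
  by rewrite sqr_sqrtr ?addr_ge0 ?sqr_ge0 // !expr2.
by move: hint; nra.
Qed.

Lemma bern_abs_le_rate :
  bern_abs a b mu x y <= Num.max 2 (t * Num.sqrt (x ^+ 2 + y ^+ 2)) * rate a b mu t.
Proof.
set K := Num.sqrt (x ^+ 2 + y ^+ 2); set M := Num.max 2 (t * K).
set I := Rintegral mu `]0%R, +oo[ (rate_kernel t).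
have K0 : 0 <= K by exact: sqrtr_ge0.
have M2 : 2 <= M by rewrite le_max lexx.
have MK : t * K <= M by rewrite le_max lexx orbT.
have I0 : 0 <= I.
  apply: Rintegral_ge0 => s; rewrite /= in_itv /= andbT => s0.
  by rewrite le_min ler01 andbT divr_ge0 // ltW.
have Q0 : 0 <= a + b * K + M * I by rewrite !addr_ge0 ?mulr_ge0 //; lra.
have hrate : a + b * K + M * I <= M * rate a b mu t.
  have : a <= M * (a / 2) by move: a0; nra.
  have : b * K <= M * (b / t).
    by rewrite mulrA ler_pdivlMr // -mulrA mulrC; move: b0 MK; nra.
  by rewrite /rate -/I !mulrDr; lra.
apply: le_of_sqr_le_mul (le_trans Q0 hrate) (le_trans sqr_bern_abs_le _).
by apply: ler_wpM2l hrate; exact: sqrtr_ge0.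
Qed.
End BernsteinBounds.

Lemma bern_re_le_abs {R : realType} (a b : R) (mu : {measure set R -> \bar R}) (x y : R) :
  bern_re a b mu x y <= bern_abs a b mu x y.
Proof. exact: le_trans (ler_norm _) (normr_le_sqrt_sqrD _ _). Qed.

Theorem lemma4p1 (R : realType) (a b : R) (mu : {measure set R -> \bar R})
  (hg : bernstein_triple a b mu) (t x y : R) (ht : 0 < t) (hx : 0 < x) :
  (t * x) * expR (- (t * x)) * rate a b mu t <= bern_re a b mu x y /\
  bern_re a b mu x y <= bern_abs a b mu x y /\
  bern_abs a b mu x y <= Num.max 2 (t * Num.sqrt (x ^+ 2 + y ^+ 2)) * rate a b mu t.
Proof.
case: hg => a0 [b0 mu_weight]; split; [|split].
- exact: bern_re_ge_rate.
- exact: bern_re_le_abs.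
- exact: bern_abs_le_rate.
Qed.
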